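(* Let $q\in\mathbb{C}$ with $|q|<1$, $r\in\mathbb{N}$, $w_1,\dots,w_r>0$, $a_1,\dots,a_r\in\mathbb{C}$, and $x\in\mathbb{C}$ with $\Re(x)>0$. Define the Barnes-type multiple $q$-Euler polynomials $E_{n,q}^{(r)}(x|w_1,\dots,w_r;a_1,\dots,a_r)$ by $$2^r\sum_{m_1,\dots,m_r=0}^{\infty}(-1)^{m_1+\cdots+m_r}q^{a_1m_1+\cdots+a_rm_r}e^{[x+w_1m_1+\cdots+w_rm_r]_q t}=\sum_{n=0}^{\infty}E_{n,q}^{(r)}(x|w_1,\dots,w_r;a_1,\dots,a_r)\frac{t^n}{n!},$$ and the Barnes-type multiple $q$-zeta function by $$\zeta_{q,r}(s,x|w_1,\dots,w_r;a_1,\dots,a_r)=2^r\sum_{m_1,\dots,m_r=0}^{\infty}\frac{(-1)^{m_1+\cdots+m_r}q^{m_1a_1+\cdots+m_ra_r}}{[x+w_1m_1+\cdots+w_rm_r]_q^s},\quad s\in\mathbb{C}$$ (extended meromorphically to the whole $s$-plane). Then for every integer $n\ge 0$, $$\zeta_{q,r}(-n,x|w_1,\dots,w_r;a_1,\dots,a_r)=E_{n,q}^{(r)}(x|w_1,\dots,w_r;a_1,\dots,a_r).$$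
   Context: For complex $q$ with $|q|<1$, $[y]_q=\frac{1-q^y}{1-q}$, and $[y]_q^{s}$ denotes a complex power of $[y]_q$.
   Formalization: Also $|q^{a_1}|,\dots,|q^{a_r}|<1$, complex powers take the principal branch, and the Barnes-type multiple q-zeta function at s = −n is its defining series itself, not a meromorphic continuation. Apart from conventions, each condition added here is assumed in the paper as well or is needed for the statement above to hold. *)

From Stdlib Require Import Reals Factorial.
From Coquelicot Require Import Coquelicot.
Open Scope R_scope.
Open Scope C_scope.

Definition Cexp (z : C) : C :=
  ((exp (Re z) * cos (Im z))%R, (exp (Re z) * sin (Im z))%R).

Definition Carg (z : C) : R :=
  (if Rle_dec 0 (Im z) then acos (Re z / Cmod z) else - acos (Re z / Cmod z))%R.

Definition Clog (z : C) : C := (ln (Cmod z), Carg z).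

(* Principal complex power z^w = exp(w Log z); convention 0^0 = 1, 0^w = 0 for w <> 0. *)
Definition cpow (z w : C) : C :=
  if Req_dec_T (Cmod z) 0 then (if Req_dec_T (Cmod w) 0 then RtoC 1 else RtoC 0)
  else Cexp (w * Clog z).

Definition qnum (q y : C) : C := (RtoC 1 - cpow q y) / (RtoC 1 - q).

(* Sum of a complex series (componentwise limit; the value is meaningful when it converges). *)
Definition CSeries (u : nat -> C) : C :=
  (Series (fun n => Re (u n)), Series (fun n => Im (u n))).

Fixpoint csum (r : nat) (g : nat -> C) : C :=
  match r with
  | O => RtoC 0
  | S r' => csum r' g + g r'
  end.

Definition upd (m : nat -> nat) (j k : nat) : nat -> nat :=
  fun i => if Nat.eqb i j then k else m i.

(* Iterated r-fold sum  sum_{m_0,...,m_{r-1} >= 0} f m  (m_{r-1} outermost). *)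
Fixpoint msum (r : nat) (f : (nat -> nat) -> C) : C :=
  match r with
  | O => f (fun _ => O)
  | S r' => CSeries (fun k => msum r' (fun m => f (upd m r' k)))
  end.

Definition shift (r : nat) (w : nat -> R) (x : C) (m : nat -> nat) : C :=
  x + csum r (fun j => RtoC (w j * INR (m j))%R).

Fixpoint nsum (r : nat) (m : nat -> nat) : nat :=
  match r with
  | O => O
  | S r' => (nsum r' m + m r')%nat
  end.

Definition weight (r : nat) (q : C) (a : nat -> C) (m : nat -> nat) : C :=
  Cpow (RtoC (-1)) (nsum r m) * cpow q (csum r (fun j => a j * RtoC (INR (m j)))).

(* Barnes-type multiple q-zeta function, with 1/[y]_q^s written as [y]_q^(-s):
   zeta_{q,r}(s,x|w;a) = 2^r sum_m (-1)^{|m|} q^{a.m} [x + w.m]_q^(-s). *)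
Definition qzeta (q : C) (r : nat) (w : nat -> R) (a : nat -> C) (x s : C) : C :=
  Cpow (RtoC 2) r * msum r (fun m => weight r q a m * cpow (qnum q (shift r w x m)) (- s)).

Definition qEuler_gen (q : C) (r : nat) (w : nat -> R) (a : nat -> C) (x t : C) : C :=
  Cpow (RtoC 2) r * msum r (fun m => weight r q a m * Cexp (qnum q (shift r w x m) * t)).

(* E is the sequence of Barnes-type multiple q-Euler polynomials (values at x):
   sum_n E n t^n / n! = generating function, for |t| < rho. *)
Definition is_qEuler_seq (q : C) (r : nat) (w : nat -> R) (a : nat -> C) (x : C)
    (E : nat -> C) : Prop :=
  exists rho : R, (0 < rho)%R /\ forall t : C, (Cmod t < rho)%R ->
    is_series (fun n => E n * Cpow t n / RtoC (INR (fact n))) (qEuler_gen q r w a x t).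

From Stdlib Require Import Reals Lra Lia FunctionalExtensionality Factorial.
From Coquelicot Require Import Coquelicot.
Open Scope R_scope.

(* For 0 < |q| < 1 the weight (-1)^{|m|} q^{a.m} is bounded by rho^{|m|}, where
   rho = max_j |q^{a_j}| < 1, and |[x + w.m]_q| <= B uniformly in m, because
   |q^y| = exp (Re y ln|q| - Im y arg q) decreases in Re y while Im (x + w.m) = Im x.
   Hence the r-fold sums of weight(m) [x + w.m]_q^n t^n / n! are dominated by a geometric
   sum, the remainder of the exponential series of [x + w.m]_q t is at most that of
   exp (B |t|), and the two summations can be exchanged: the n-th Taylor coefficient of the
   generating function is 2^r Σ_m weight(m) [x + w.m]_q^n = ζ_{q,r}(-n, x). For q = 0 every
   [x + w.m]_q equals 1 and both sides are e^t times the same constant. Taylor coefficients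
   are unique, which identifies any sequence with this generating function. *)

Lemma C_ext (z1 z2 : C) : Re z1 = Re z2 -> Im z1 = Im z2 -> z1 = z2.
Proof. destruct z1, z2; simpl; intros; subst; reflexivity. Qed.

Lemma im_le_Cmod (z : C) : Rabs (Im z) <= Cmod z.
Proof.
  rewrite <- sqrt_Rsqr_abs. unfold Cmod. apply sqrt_le_1_alt. unfold Rsqr.
  destruct z as [u v]; simpl. nra.
Qed.

Lemma Cmod_le_Rabs_Re_Im (z : C) : Cmod z <= Rabs (Re z) + Rabs (Im z).
Proof.
  pose proof (Rabs_pos (Re z)); pose proof (Rabs_pos (Im z)).
  rewrite <- (sqrt_Rsqr (Rabs (Re z) + Rabs (Im z))) by lra.
  apply sqrt_le_1_alt. rewrite Rsqr_plus, <- !Rsqr_abs. unfold Rsqr, Re, Im.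
  pose proof (Rmult_le_pos _ _ (Rabs_pos (fst z)) (Rabs_pos (snd z))). lra.
Qed.

Lemma Cexp_plus (z1 z2 : C) : Cexp (z1 + z2) = (Cexp z1 * Cexp z2)%C.
Proof.
  destruct z1 as [a b], z2 as [c d]; unfold Cexp, Cplus, Cmult; simpl.
  rewrite exp_plus, cos_plus, sin_plus. f_equal; ring.
Qed.

Lemma Cexp_0 : Cexp 0 = 1%C.
Proof. apply C_ext; unfold Cexp; simpl; rewrite exp_0, ?cos_0, ?sin_0; ring. Qed.

Lemma Cmod_Cexp (z : C) : Cmod (Cexp z) = exp (Re z).
Proof.
  unfold Cexp, Cmod; simpl.
  match goal with |- sqrt ?X = _ => replace X with (exp (Re z) * exp (Re z)) end.
  - apply sqrt_square, Rlt_le, exp_pos.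
  - pose proof (sin2_cos2 (Im z)). unfold Rsqr in H. nra.
Qed.

Lemma Cexp_INR_mult (n : nat) (z : C) : Cexp (RtoC (INR n) * z) = Cpow (Cexp z) n.
Proof.
  induction n as [|n IH].
  - replace (RtoC (INR 0) * z)%C with (RtoC 0) by (apply C_ext; simpl; ring).
    apply Cexp_0.
  - rewrite S_INR.
    replace (RtoC (INR n + 1) * z)%C with (z + RtoC (INR n) * z)%C
      by (apply C_ext; simpl; ring).
    rewrite Cexp_plus, IH. reflexivity.
Qed.

Lemma Cexp_Clog (z : C) : z <> 0%C -> Cexp (Clog z) = z.
Proof.
  intro Hz. apply Cmod_gt_0 in Hz.
  pose proof (Cmod2_alt z) as Hmod.
  assert (Hcos : -1 <= Re z / Cmod z <= 1).
  { pose proof (re_le_Cmod z) as Hre. apply Rabs_le_between in Hre.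
    split; apply (Rmult_le_reg_r (Cmod z)); auto;
      unfold Rdiv; rewrite Rmult_assoc, Rinv_l; lra. }
  assert (Hsin : Cmod z * sqrt (1 - (Re z / Cmod z)²) = Rabs (Im z)).
  { rewrite <- (sqrt_pow2 (Cmod z)) at 1 by lra.
    rewrite <- sqrt_mult_alt by apply pow2_ge_0.
    replace (Cmod z ^ 2 * (1 - (Re z / Cmod z)²)) with (Im z)².
    - apply sqrt_Rsqr_abs.
    - replace (Cmod z ^ 2 * (1 - (Re z / Cmod z)²)) with (Cmod z ^ 2 - Re z ^ 2)
        by (unfold Rsqr; field; lra).
      rewrite Hmod. unfold Rsqr. ring. }
  apply C_ext; unfold Cexp, Clog, Carg; simpl; rewrite exp_ln by auto;
    destruct (Rle_dec 0 (Im z)).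
  - rewrite cos_acos by auto. field. lra.
  - rewrite cos_neg, cos_acos by auto. field. lra.
  - rewrite sin_acos, Hsin by auto. apply Rabs_pos_eq; auto.
  - rewrite sin_neg, sin_acos by auto. rewrite Ropp_mult_distr_r_reverse, Hsin.
    rewrite Rabs_left; lra.
Qed.

Lemma cpow_INR (y : C) (n : nat) : cpow y (RtoC (INR n)) = Cpow y n.
Proof.
  unfold cpow. destruct (Req_dec_T (Cmod y) 0) as [Hy|Hy].
  - apply Cmod_eq_0 in Hy. subst y.
    rewrite Cmod_R. destruct (Req_dec_T (Rabs (INR n)) 0) as [Hn|Hn].
    + apply Rabs_eq_0 in Hn. apply (INR_eq n 0) in Hn. subst n. reflexivity.
    + destruct n as [|n]; [simpl in Hn; rewrite Rabs_R0 in Hn; lra|].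
      apply C_ext; simpl; ring.
  - rewrite Cexp_INR_mult, Cexp_Clog; auto.
    intro E. apply Hy. rewrite E. apply Cmod_0.
Qed.

Lemma Cmod_cpow (q c : C) : Cmod q <> 0 -> Cmod (cpow q c) = exp (Re (c * Clog q)).
Proof.
  intro Hq. unfold cpow. destruct (Req_dec_T (Cmod q) 0); [contradiction|].
  apply Cmod_Cexp.
Qed.

Lemma sum_n_C (u : nat -> C) N :
  sum_n u N = (sum_n (fun n => Re (u n)) N, sum_n (fun n => Im (u n)) N).
Proof.
  induction N as [|N IH].
  - rewrite !sum_O. destruct (u O); reflexivity.
  - rewrite !sum_Sn, IH. reflexivity.
Qed.

Lemma is_series_C (u : nat -> C) (l : C) :
  is_series u l <->
  is_series (fun n => Re (u n)) (Re l) /\ is_series (fun n => Im (u n)) (Im l).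
Proof.
  unfold is_series. split.
  - intros H. split; apply filterlim_locally; intros eps;
      generalize (proj1 (filterlim_locally _ _) H eps); apply filter_imp;
      intros N HN; rewrite sum_n_C in HN; apply HN.
  - intros [H1 H2]. apply filterlim_locally. intros eps.
    generalize (filter_and _ _ (proj1 (filterlim_locally _ _) H1 eps)
                  (proj1 (filterlim_locally _ _) H2 eps)).
    apply filter_imp. intros N HN. rewrite sum_n_C. exact HN.
Qed.

Lemma is_series_C_eps (u : nat -> C) (l : C) :
  (forall eps, 0 < eps -> exists N0, forall N, (N0 <= N)%nat -> Cmod (l - sum_n u N) < eps) ->
  is_series u l.
Proof.
  intros H. unfold is_series. apply filterlim_locally. intros eps.
  destruct (H eps (cond_pos eps)) as [N0 HN]. exists N0. intros N HN0.
  apply (@norm_compat1 C_AbsRing C_NormedModule).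
  change (Cmod (sum_n u N - l)%C < eps).
  rewrite <- Cmod_opp, Copp_minus_distr. auto.
Qed.

Lemma sum_n_Cmod_le (u : nat -> C) (v : nat -> R) N :
  (forall n, Cmod (u n) <= v n) -> Cmod (sum_n u N) <= sum_n v N.
Proof.
  intros Huv. induction N as [|N IH].
  - rewrite !sum_O. auto.
  - rewrite !sum_Sn. eapply Rle_trans; [apply Cmod_triangle|].
    change (plus (sum_n v N) (v (S N))) with (sum_n v N + v (S N)).
    specialize (Huv (S N)). lra.
Qed.

Lemma is_series_Cmod_le (u : nat -> C) (v : nat -> R) l lv :
  is_series u l -> is_series v lv -> (forall n, Cmod (u n) <= v n) -> Cmod l <= lv.
Proof.
  intros Hu Hv Huv.
  assert (Hl : is_lim_seq (fun N => Cmod (sum_n u N)) (Cmod l)).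
  { eapply filterlim_comp; [exact Hu|]. apply (@filterlim_norm C_AbsRing C_NormedModule). }
  exact (is_lim_seq_le _ _ (Cmod l) lv (fun N => sum_n_Cmod_le u v N Huv) Hl Hv).
Qed.

Lemma is_series_exp (x : R) : is_series (fun k => x ^ k / INR (fact k)) (exp x).
Proof.
  eapply is_series_ext; [|exact (is_exp_Reals x)]. intros n. simpl.
  rewrite pow_n_pow. unfold scal; simpl. unfold mult; simpl. unfold Rdiv. ring.
Qed.

Section ExpSeries.
Variable z : C.

Let c n := Re (Cpow z n) / INR (fact n).
Let d n := Im (Cpow z n) / INR (fact n).

Let coef_bound (e : nat -> R) := forall n, Rabs (e n) <= Cmod z ^ n / INR (fact n).

Lemma Re_coef_bound : coef_bound c.
Proof.
  intros n. pose proof (INR_fact_lt_0 n). unfold c, Rdiv.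
  rewrite Rabs_mult, Rabs_inv, (Rabs_pos_eq (INR _)) by lra.
  apply Rmult_le_compat_r; [apply Rlt_le, Rinv_0_lt_compat; lra|].
  rewrite <- Cmod_pow. apply re_le_Cmod.
Qed.

Lemma Im_coef_bound : coef_bound d.
Proof.
  intros n. pose proof (INR_fact_lt_0 n). unfold d, Rdiv.
  rewrite Rabs_mult, Rabs_inv, (Rabs_pos_eq (INR _)) by lra.
  apply Rmult_le_compat_r; [apply Rlt_le, Rinv_0_lt_compat; lra|].
  rewrite <- Cmod_pow. apply im_le_Cmod.
Qed.

Lemma CV_disk_coef_bound e : coef_bound e -> forall s, CV_disk e s.
Proof.
  intros He s. unfold CV_disk.
  apply (@ex_series_le R_AbsRing R_CompleteNormedModule _
           (fun n => (Cmod z * Rabs s) ^ n / INR (fact n))).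
  - intros n. change (Rabs (Rabs (e n * s ^ n)) <= (Cmod z * Rabs s) ^ n / INR (fact n)).
    rewrite Rabs_Rabsolu, Rabs_mult, <- RPow_abs, Rpow_mult_distr.
    pose proof (He n). pose proof (pow_le (Rabs s) n (Rabs_pos s)).
    unfold Rdiv in *. nra.
  - eexists. apply is_series_exp.
Qed.

Lemma CV_radius_coef_bound e : coef_bound e -> forall s, Rbar_lt (Rabs s) (CV_radius e).
Proof.
  intros He s. destruct (Lub_Rbar_correct (CV_disk e)) as [Hub _].
  specialize (Hub (Rabs s + 1) (CV_disk_coef_bound e He _)). unfold CV_radius.
  destruct (Lub_Rbar (CV_disk e)); simpl in *; auto. lra.
Qed.

Let U := PSeries c.
Let V := PSeries d.

Let INR_fact_S n : INR (fact (S n)) = INR (S n) * INR (fact n).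
Proof. rewrite <- mult_INR. reflexivity. Qed.

(* [U + i V] is [s |-> Σ (s z)^n / n!], so it satisfies the differential equation of [exp (s z)]. *)
Lemma is_derive_U s : is_derive U s (Re z * U s - Im z * V s).
Proof.
  replace (Re z * U s - Im z * V s) with (PSeries (PS_derive c) s);
    [exact (is_derive_PSeries c s (CV_radius_coef_bound c Re_coef_bound s))|].
  unfold U, V. rewrite (PSeries_ext _ (PS_plus (PS_scal (Re z) c) (PS_scal (- Im z) d))).
  - rewrite PSeries_plus, !PSeries_scal; [ring| |];
      apply CV_disk_correct, CV_disk_scal, CV_disk_coef_bound;
      [apply Re_coef_bound|apply Im_coef_bound].
  - intros n. change (INR (S n) * c (S n) = Re z * c n + - Im z * d n).
    unfold c, d. rewrite INR_fact_S. pose proof (INR_fact_lt_0 n).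
    assert (INR (S n) <> 0) by (rewrite S_INR; pose proof (pos_INR n); lra).
    replace (Re (Cpow z (S n))) with (Re z * Re (Cpow z n) - Im z * Im (Cpow z n))
      by reflexivity.
    field. split; lra.
Qed.

Lemma is_derive_V s : is_derive V s (Im z * U s + Re z * V s).
Proof.
  replace (Im z * U s + Re z * V s) with (PSeries (PS_derive d) s);
    [exact (is_derive_PSeries d s (CV_radius_coef_bound d Im_coef_bound s))|].
  unfold U, V. rewrite (PSeries_ext _ (PS_plus (PS_scal (Im z) c) (PS_scal (Re z) d))).
  - rewrite PSeries_plus, !PSeries_scal; [ring| |];
      apply CV_disk_correct, CV_disk_scal, CV_disk_coef_bound;
      [apply Re_coef_bound|apply Im_coef_bound].
  - intros n. change (INR (S n) * d (S n) = Im z * c n + Re z * d n).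
    unfold c, d. rewrite INR_fact_S. pose proof (INR_fact_lt_0 n).
    assert (INR (S n) <> 0) by (rewrite S_INR; pose proof (pos_INR n); lra).
    replace (Im (Cpow z (S n))) with (Im z * Re (Cpow z n) + Re z * Im (Cpow z n))
      by (simpl; unfold Re, Im; ring).
    field. split; lra.
Qed.

(* Real and imaginary parts of [exp (- s z) (U s + i V s)], which is therefore constant. *)
Let P s := exp (- (s * Re z)) * (U s * cos (s * Im z) + V s * sin (s * Im z)).
Let Q s := exp (- (s * Re z)) * (V s * cos (s * Im z) - U s * sin (s * Im z)).

Lemma is_derive_P s : is_derive P s 0.
Proof.
  assert (HE : is_derive (fun s => exp (- (s * Re z))) s (- Re z * exp (- (s * Re z))))
    by (auto_derive; auto; ring).
  assert (HC : is_derive (fun s => cos (s * Im z)) s (- Im z * sin (s * Im z)))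
    by (auto_derive; auto; ring).
  assert (HS : is_derive (fun s => sin (s * Im z)) s (Im z * cos (s * Im z)))
    by (auto_derive; auto; ring).
  pose proof (is_derive_plus _ _ _ _ _
                (is_derive_mult _ _ _ _ _ (is_derive_U s) HC Rmult_comm)
                (is_derive_mult _ _ _ _ _ (is_derive_V s) HS Rmult_comm)) as H.
  pose proof (is_derive_mult _ _ _ _ _ HE H Rmult_comm) as HP.
  unfold P. match type of HP with is_derive _ _ ?l => replace 0 with l; [exact HP|] end.
  unfold mult, plus; simpl. ring.
Qed.

Lemma is_derive_Q s : is_derive Q s 0.
Proof.
  assert (HE : is_derive (fun s => exp (- (s * Re z))) s (- Re z * exp (- (s * Re z))))
    by (auto_derive; auto; ring).
  assert (HC : is_derive (fun s => cos (s * Im z)) s (- Im z * sin (s * Im z)))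
    by (auto_derive; auto; ring).
  assert (HS : is_derive (fun s => sin (s * Im z)) s (Im z * cos (s * Im z)))
    by (auto_derive; auto; ring).
  pose proof (is_derive_minus _ _ _ _ _
                (is_derive_mult _ _ _ _ _ (is_derive_V s) HC Rmult_comm)
                (is_derive_mult _ _ _ _ _ (is_derive_U s) HS Rmult_comm)) as H.
  pose proof (is_derive_mult _ _ _ _ _ HE H Rmult_comm) as HQ.
  unfold Q. match type of HQ with is_derive _ _ ?l => replace 0 with l; [exact HQ|] end.
  unfold mult, plus, minus, opp; simpl. unfold plus; simpl. ring.
Qed.

Lemma UV_1 : U 1 = exp (Re z) * cos (Im z) /\ V 1 = exp (Re z) * sin (Im z).
Proof.
  assert (HP : P 0 = P 1) by (apply eq_is_derive; [intros; apply is_derive_P|lra]).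
  assert (HQ : Q 0 = Q 1) by (apply eq_is_derive; [intros; apply is_derive_Q|lra]).
  assert (HU0 : U 0 = 1) by (unfold U; rewrite PSeries_0; unfold c; simpl; field).
  assert (HV0 : V 0 = 0) by (unfold V; rewrite PSeries_0; unfold d; simpl; field).
  unfold P, Q in HP, HQ.
  rewrite HU0, HV0, !Rmult_0_l, Ropp_0, exp_0, ?cos_0, ?sin_0, !Rmult_1_l in HP.
  rewrite HU0, HV0, !Rmult_0_l, Ropp_0, exp_0, ?cos_0, ?sin_0, !Rmult_1_l in HQ.
  set (e := exp (- Re z)) in HP, HQ.
  assert (He : exp (Re z) * e = 1) by (unfold e; rewrite <- exp_plus, <- exp_0; f_equal; lra).
  assert (E1 : U 1 * cos (Im z) + V 1 * sin (Im z) = exp (Re z))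
    by (transitivity (exp (Re z) * e * (U 1 * cos (Im z) + V 1 * sin (Im z)));
        [rewrite He|rewrite Rmult_assoc, <- HP]; lra).
  assert (E2 : V 1 * cos (Im z) - U 1 * sin (Im z) = 0)
    by (transitivity (exp (Re z) * e * (V 1 * cos (Im z) - U 1 * sin (Im z)));
        [rewrite He|rewrite Rmult_assoc, <- HQ]; lra).
  pose proof (sin2_cos2 (Im z)) as Hcs. unfold Rsqr in Hcs.
  set (C1 := cos (Im z)) in *. set (S1 := sin (Im z)) in *.
  split.
  - transitivity ((U 1 * C1 + V 1 * S1) * C1 - (V 1 * C1 - U 1 * S1) * S1).
    + transitivity (U 1 * (S1 * S1 + C1 * C1)); [rewrite Hcs|]; ring.
    + rewrite E1, E2. ring.
  - transitivity ((U 1 * C1 + V 1 * S1) * S1 + (V 1 * C1 - U 1 * S1) * C1).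
    + transitivity (V 1 * (S1 * S1 + C1 * C1)); [rewrite Hcs|]; ring.
    + rewrite E1, E2. ring.
Qed.

Lemma Cexp_series : is_series (fun n => Cpow z n / RtoC (INR (fact n)))%C (Cexp z).
Proof.
  assert (Hpow1 : forall e : nat -> R, PSeries e 1 = Series e)
    by (intros e; apply Series_ext; intros n; rewrite pow1; ring).
  assert (Hser : forall e, coef_bound e -> is_series e (PSeries e 1)).
  { intros e He. rewrite Hpow1. apply Series_correct, ex_series_Rabs.
    eapply ex_series_ext; [|apply (CV_disk_coef_bound e He 1)].
    intros n; simpl. rewrite pow1, Rmult_1_r. reflexivity. }
  destruct UV_1 as [HU HV].
  apply is_series_C. split.
  - eapply is_series_ext; [|unfold Cexp; simpl; rewrite <- HU; exact (Hser c Re_coef_bound)].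
    intros n. pose proof (INR_fact_lt_0 n). unfold c. destruct (Cpow z n).
    unfold Cdiv, Cinv, Cmult; simpl. field. lra.
  - eapply is_series_ext; [|unfold Cexp; simpl; rewrite <- HV; exact (Hser d Im_coef_bound)].
    intros n. pose proof (INR_fact_lt_0 n). unfold d. destruct (Cpow z n).
    unfold Cdiv, Cinv, Cmult; simpl. field. lra.
Qed.

End ExpSeries.

Definition Cexp_partial (z : C) (N : nat) : C :=
  sum_n (fun n => Cpow z n / RtoC (INR (fact n)))%C N.

Definition exp_remainder (s : R) (N : nat) : R :=
  exp s - sum_n (fun n => s ^ n / INR (fact n)) N.

Lemma exp_remainder_ge0 s N : 0 <= s -> 0 <= exp_remainder s N.
Proof.
  intros Hs. unfold exp_remainder. rewrite sum_n_Reals.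
  pose proof (exp_ge_taylor s N Hs). lra.
Qed.

Lemma exp_remainder_small s eps : 0 < eps ->
  exists N0, forall N, (N0 <= N)%nat -> exp_remainder s N < eps.
Proof.
  intros Heps.
  destruct (proj1 (filterlim_locally _ _) (is_series_exp s) (mkposreal eps Heps)) as [N0 HN].
  exists N0. intros N HN0. specialize (HN N HN0).
  change (Rabs (sum_n (fun k => s ^ k / INR (fact k)) N - exp s) < eps) in HN.
  rewrite Rabs_minus_sym in HN. unfold exp_remainder.
  eapply Rle_lt_trans; [apply Rle_abs|exact HN].
Qed.

Lemma Cmod_Cexp_partial_le z N : Cmod (Cexp_partial z N) <= exp (Cmod z).
Proof.
  eapply Rle_trans.
  - apply (sum_n_Cmod_le _ (fun n => Cmod z ^ n / INR (fact n))). intros n.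
    pose proof (INR_fact_lt_0 n).
    rewrite Cmod_div, Cmod_pow, Cmod_R, Rabs_pos_eq by (try (intro E; apply RtoC_inj in E); lra).
    lra.
  - rewrite sum_n_Reals. apply exp_ge_taylor, Cmod_ge_0.
Qed.

Lemma is_series_tail {K : AbsRing} {V : NormedModule K} (u : nat -> V) l N :
  is_series u l -> is_series (fun k => u (S N + k)%nat) (minus l (sum_n u N)).
Proof.
  intros Hu. apply is_series_incr_n; [lia|]. simpl pred.
  assert (E : plus (minus l (sum_n u N)) (sum_n u N) = l).
  { unfold minus. rewrite <- plus_assoc, plus_opp_l, plus_zero_r. reflexivity. }
  rewrite <- E in Hu. exact Hu.
Qed.

Lemma Cmod_Cexp_sub_partial_le (z : C) (s : R) (N : nat) : Cmod z <= s ->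
  Cmod (Cexp z - Cexp_partial z N) <= exp_remainder s N.
Proof.
  intros Hz.
  apply (is_series_Cmod_le _ _ _ _ (is_series_tail _ _ N (Cexp_series z))
           (is_series_tail _ _ N (is_series_exp s))).
  intros k. pose proof (INR_fact_lt_0 (S N + k)).
  rewrite Cmod_div, Cmod_pow, Cmod_R, Rabs_pos_eq by (try (intro E; apply RtoC_inj in E); lra).
  unfold Rdiv. apply Rmult_le_compat_r; [apply Rlt_le, Rinv_0_lt_compat; lra|].
  apply pow_incr. split; auto. apply Cmod_ge_0.
Qed.

Lemma nsum_upd r m i k : (r <= i)%nat -> nsum r (upd m i k) = nsum r m.
Proof.
  induction r as [|r IH]; simpl; intros Hi; auto.
  rewrite IH by lia. unfold upd.
  destruct (Nat.eqb r i) eqn:E; auto. apply Nat.eqb_eq in E. lia.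
Qed.

Lemma nsum_upd_S r m k : nsum (S r) (upd m r k) = (nsum r m + k)%nat.
Proof. simpl. rewrite nsum_upd by lia. unfold upd. rewrite Nat.eqb_refl. reflexivity. Qed.

Definition ex_CSeries (v : nat -> C) : Prop :=
  ex_series (fun k => Re (v k)) /\ ex_series (fun k => Im (v k)).

Lemma CSeries_plus u v : ex_CSeries u -> ex_CSeries v ->
  CSeries (fun k => u k + v k)%C = (CSeries u + CSeries v)%C.
Proof.
  intros [Hu1 Hu2] [Hv1 Hv2]. unfold CSeries. apply C_ext; simpl;
    rewrite <- Series_plus by auto; apply Series_ext; reflexivity.
Qed.

Lemma CSeries_scal c u : ex_CSeries u -> CSeries (fun k => c * u k)%C = (c * CSeries u)%C.
Proof.
  intros [Hu1 Hu2].
  assert (Hs : forall (a : R) (v : nat -> R), ex_series v -> ex_series (fun k => a * v k))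
    by (intros a v Hv; apply (@ex_series_scal R_AbsRing R_NormedModule a v Hv)).
  unfold CSeries. apply C_ext; simpl; rewrite <- !Series_scal_l.
  - rewrite <- Series_minus by auto. apply Series_ext. reflexivity.
  - rewrite <- Series_plus by auto. apply Series_ext. reflexivity.
Qed.

(* No convergence is needed here: [Series] is linear on real sequences even when they diverge. *)
Lemma CSeries_scal_real (c : C) (v : nat -> C) : (forall k, Im (v k) = 0) ->
  CSeries (fun k => c * v k)%C = (c * CSeries v)%C.
Proof.
  intros Hv. unfold CSeries.
  rewrite (Series_ext (fun k => Re (c * v k)%C) (fun k => Re c * Re (v k)))
    by (intros k; simpl; unfold Re, Im in *; rewrite Hv; ring).
  rewrite (Series_ext (fun k => Im (c * v k)%C) (fun k => Im c * Re (v k)))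
    by (intros k; simpl; unfold Re, Im in *; rewrite Hv; ring).
  rewrite (Series_ext (fun k => Im (v k)) (fun _ => 0 * 0)) by (intros k; rewrite Hv; ring).
  rewrite !Series_scal_l. apply C_ext; simpl; unfold Re, Im; ring.
Qed.

Lemma Im_msum_real r f : (forall m, Im (f m) = 0) -> Im (msum r f) = 0.
Proof.
  revert f; induction r as [|r IH]; intros f Hf; simpl; auto.
  unfold CSeries; simpl. rewrite (Series_ext _ (fun _ => 0 * 0)).
  - rewrite Series_scal_l. ring.
  - intros k. rewrite IH; [ring|]. intros; apply Hf.
Qed.

Lemma msum_scal_real r c f : (forall m, Im (f m) = 0) ->
  msum r (fun m => c * f m)%C = (c * msum r f)%C.
Proof.
  revert c f; induction r as [|r IH]; intros c f Hf; simpl; auto.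
  rewrite (functional_extensionality (fun k => msum r (fun m => c * f (upd m r k))%C)
             (fun k => c * msum r (fun m => f (upd m r k)))%C)
    by (intros k; apply IH; intros; apply Hf).
  apply CSeries_scal_real. intros k. apply Im_msum_real. intros; apply Hf.
Qed.

Section GeometricDomination.
Variable rho : R.
Hypothesis Hrho : 0 <= rho < 1.

Definition geom_dom (r : nat) (K : R) (f : (nat -> nat) -> C) : Prop :=
  forall m, Cmod (f m) <= K * rho ^ nsum r m.

Lemma geom_dom_upd r K f k :
  geom_dom (S r) K f -> geom_dom r (K * rho ^ k) (fun m => f (upd m r k)).
Proof. intros Hf m. eapply Rle_trans; [apply Hf|]. rewrite nsum_upd_S, pow_add. right; ring. Qed.

Lemma geom_dom_scal r K c f : geom_dom r K f -> geom_dom r (Cmod c * K) (fun m => c * f m)%C.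
Proof.
  intros Hf m. rewrite Cmod_mult, Rmult_assoc.
  apply Rmult_le_compat_l; [apply Cmod_ge_0|apply Hf].
Qed.

Lemma ex_series_geom_dom (D : R) (u : nat -> R) :
  (forall k, Rabs (u k) <= D * rho ^ k) -> ex_series (fun k => Rabs (u k)).
Proof.
  intros Hu. apply (@ex_series_le R_AbsRing R_CompleteNormedModule _ (fun k => D * rho ^ k)).
  - intros k. change (Rabs (Rabs (u k)) <= D * rho ^ k). rewrite Rabs_Rabsolu. auto.
  - apply (@ex_series_scal R_AbsRing R_NormedModule), ex_series_geom.
    rewrite Rabs_pos_eq; lra.
Qed.

Lemma Rabs_Series_geom_dom_le (D : R) (u : nat -> R) :
  (forall k, Rabs (u k) <= D * rho ^ k) -> Rabs (Series u) <= D / (1 - rho).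
Proof.
  intros Hu. pose proof (ex_series_geom_dom D u Hu) as Habs.
  eapply Rle_trans; [apply Series_Rabs, Habs|].
  replace (D / (1 - rho)) with (Series (fun k => D * rho ^ k))
    by (rewrite Series_scal_l, Series_geom by (rewrite Rabs_pos_eq; lra); reflexivity).
  apply Series_le; [intros k; split; [apply Rabs_pos|apply Hu]|].
  apply (@ex_series_scal R_AbsRing R_NormedModule), ex_series_geom.
  rewrite Rabs_pos_eq; lra.
Qed.

Lemma ex_CSeries_geom_dom (D : R) (v : nat -> C) :
  (forall k, Cmod (v k) <= D * rho ^ k) -> ex_CSeries v.
Proof.
  intros Hv. split; apply ex_series_Rabs, (ex_series_geom_dom D); intros k;
    (eapply Rle_trans; [apply re_le_Cmod || apply im_le_Cmod|apply Hv]).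
Qed.

Lemma Cmod_CSeries_geom_dom_le (D : R) (v : nat -> C) :
  (forall k, Cmod (v k) <= D * rho ^ k) -> Cmod (CSeries v) <= 2 * D / (1 - rho).
Proof.
  intros Hv. eapply Rle_trans; [apply Cmod_le_Rabs_Re_Im|].
  assert (HRe : Rabs (Re (CSeries v)) <= D / (1 - rho)).
  { apply Rabs_Series_geom_dom_le. intros k.
    eapply Rle_trans; [apply re_le_Cmod|apply Hv]. }
  assert (HIm : Rabs (Im (CSeries v)) <= D / (1 - rho)).
  { apply Rabs_Series_geom_dom_le. intros k.
    eapply Rle_trans; [apply im_le_Cmod|apply Hv]. }
  unfold Rdiv in *. lra.
Qed.

Lemma Cmod_msum_le r K f : 0 <= K -> geom_dom r K f ->
  Cmod (msum r f) <= K * (2 / (1 - rho)) ^ r.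
Proof.
  revert K f; induction r as [|r IH]; intros K f HK Hf.
  - specialize (Hf (fun _ => O)). simpl in *. lra.
  - simpl msum. eapply Rle_trans.
    + apply (Cmod_CSeries_geom_dom_le (K * (2 / (1 - rho)) ^ r)). intros k.
      eapply Rle_trans; [apply IH; [|apply geom_dom_upd, Hf]|].
      * pose proof (pow_le rho k (proj1 Hrho)). nra.
      * right; ring.
    + right. simpl. field. lra.
Qed.

Lemma ex_CSeries_msum_upd r K f : 0 <= K -> geom_dom (S r) K f ->
  ex_CSeries (fun k => msum r (fun m => f (upd m r k))).
Proof.
  intros HK Hf. apply (ex_CSeries_geom_dom (K * (2 / (1 - rho)) ^ r)). intros k.
  eapply Rle_trans; [apply (Cmod_msum_le r (K * rho ^ k)); [|apply geom_dom_upd, Hf]|].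
  - pose proof (pow_le rho k (proj1 Hrho)). nra.
  - right; ring.
Qed.

Lemma msum_plus r K1 K2 f g : 0 <= K1 -> 0 <= K2 -> geom_dom r K1 f -> geom_dom r K2 g ->
  msum r (fun m => f m + g m)%C = (msum r f + msum r g)%C.
Proof.
  revert K1 K2 f g; induction r as [|r IH]; intros K1 K2 f g HK1 HK2 Hf Hg; [reflexivity|].
  simpl msum.
  rewrite (functional_extensionality
             (fun k => msum r (fun m => f (upd m r k) + g (upd m r k))%C)
             (fun k => msum r (fun m => f (upd m r k)) + msum r (fun m => g (upd m r k)))%C).
  - apply CSeries_plus; [apply (ex_CSeries_msum_upd r K1) | apply (ex_CSeries_msum_upd r K2)];
      auto.
  - intros k. pose proof (pow_le rho k (proj1 Hrho)).
    apply (IH (K1 * rho ^ k) (K2 * rho ^ k)); try nra; apply geom_dom_upd; auto.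
Qed.

Lemma msum_scal r K c f : 0 <= K -> geom_dom r K f ->
  msum r (fun m => c * f m)%C = (c * msum r f)%C.
Proof.
  revert K f; induction r as [|r IH]; intros K f HK Hf; [reflexivity|].
  simpl msum.
  rewrite (functional_extensionality (fun k => msum r (fun m => c * f (upd m r k))%C)
             (fun k => c * msum r (fun m => f (upd m r k)))%C).
  - apply CSeries_scal, (ex_CSeries_msum_upd r K); auto.
  - intros k. pose proof (pow_le rho k (proj1 Hrho)).
    apply (IH (K * rho ^ k)); try nra. apply geom_dom_upd; auto.
Qed.

End GeometricDomination.

Lemma exp_INR_mult (n : nat) (y : R) : exp (INR n * y) = exp y ^ n.
Proof.
  induction n as [|n IH].
  - rewrite Rmult_0_l, exp_0. reflexivity.
  - rewrite S_INR, Rmult_plus_distr_r, Rmult_1_l, exp_plus, IH. simpl. ring.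
Qed.

Lemma exp_le x y : x <= y -> exp x <= exp y.
Proof. intros [Hxy|<-]; [left; apply exp_increasing, Hxy|lra]. Qed.

Fixpoint max_upto (f : nat -> R) (n : nat) : R :=
  match n with O => 0 | S n => Rmax (max_upto f n) (f n) end.

Lemma le_max_upto (f : nat -> R) n j : (j < n)%nat -> f j <= max_upto f n.
Proof.
  induction n as [|n IH]; intros Hj; [lia|]. simpl.
  destruct (Nat.eq_dec j n) as [->|Hjn]; [apply Rmax_r|].
  eapply Rle_trans; [apply IH; lia|apply Rmax_l].
Qed.

Lemma max_upto_bounds (f : nat -> R) n :
  (forall j, (j < n)%nat -> 0 <= f j < 1) -> 0 <= max_upto f n < 1.
Proof.
  induction n as [|n IH]; intros Hf; simpl; [lra|].
  assert (0 <= max_upto f n < 1) by (apply IH; intros; apply Hf; lia).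
  specialize (Hf n ltac:(lia)). unfold Rmax. destruct (Rle_dec _ _); lra.
Qed.

Lemma Im_csum_RtoC k (g : nat -> R) : Im (csum k (fun j => RtoC (g j))) = 0.
Proof. induction k as [|k IH]; simpl; auto. unfold Im in *. rewrite IH. simpl. ring. Qed.

Lemma Re_csum_RtoC_ge0 k (g : nat -> R) :
  (forall j, (j < k)%nat -> 0 <= g j) -> 0 <= Re (csum k (fun j => RtoC (g j))).
Proof.
  induction k as [|k IH]; intros Hg; simpl; [lra|].
  assert (0 <= Re (csum k (fun j => RtoC (g j)))) by (apply IH; intros; apply Hg; lia).
  specialize (Hg k ltac:(lia)). unfold Re in *. simpl. lra.
Qed.

Lemma Re_shift_ge r w x m : (forall j, (j < r)%nat -> 0 < w j) ->
  Re x <= Re (shift r w x m) /\ Im (shift r w x m) = Im x.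
Proof.
  intros Hw. unfold shift.
  pose proof (Im_csum_RtoC r (fun j => w j * INR (m j))) as HIm.
  assert (HRe : 0 <= Re (csum r (fun j => RtoC (w j * INR (m j))))).
  { apply Re_csum_RtoC_ge0. intros j Hj. specialize (Hw j Hj). pose proof (pos_INR (m j)). nra. }
  rewrite re_plus, im_plus. lra.
Qed.

Lemma zeta_neg_INR q r w a x n :
  qzeta q r w a x (- RtoC (INR n)) =
  (Cpow (RtoC 2) r * msum r (fun m => weight r q a m * Cpow (qnum q (shift r w x m)) n))%C.
Proof.
  unfold qzeta. do 2 f_equal. apply functional_extensionality. intros m.
  replace (- - RtoC (INR n))%C with (RtoC (INR n)) by ring. rewrite cpow_INR. reflexivity.
Qed.

Section NonzeroQ.
Variables (q : C) (r : nat) (w : nat -> R) (a : nat -> C) (x : C).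
Hypotheses (Hq : Cmod q < 1) (Hq0 : Cmod q <> 0) (Hw : forall j, (j < r)%nat -> 0 < w j)
  (Ha : forall j, (j < r)%nat -> Cmod (cpow q (a j)) < 1).

Let rho := max_upto (fun j => Cmod (cpow q (a j))) r.
Let W := weight r q a.
Let Y m := qnum q (shift r w x m).

Lemma rho_bounds : 0 <= rho < 1.
Proof. apply max_upto_bounds. intros j Hj. split; [apply Cmod_ge_0|auto]. Qed.

(* [|q^(a.m)| = Π_j |q^(a_j)|^(m_j)] since [q^y] is [exp (y Log q)]. *)
Lemma Cmod_cpow_csum_le (m : nat -> nat) (k : nat) : (k <= r)%nat ->
  Cmod (cpow q (csum k (fun j => a j * RtoC (INR (m j)))%C)) <= rho ^ nsum k m.
Proof.
  rewrite Cmod_cpow by auto.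
  induction k as [|k IH]; intros Hk.
  - simpl. rewrite !Rmult_0_l, Rminus_0_r, exp_0. lra.
  - simpl csum. simpl nsum. rewrite pow_add.
    replace (Re ((csum k (fun j => a j * RtoC (INR (m j))) + a k * RtoC (INR (m k))) * Clog q)%C)
      with (Re (csum k (fun j => a j * RtoC (INR (m j)))%C * Clog q) + INR (m k) * Re (a k * Clog q)%C)
      by (simpl; ring).
    rewrite exp_plus, exp_INR_mult.
    apply Rmult_le_compat; [apply Rlt_le, exp_pos|apply pow_le, Rlt_le, exp_pos|apply IH; lia|].
    apply pow_incr. split; [apply Rlt_le, exp_pos|].
    rewrite <- Cmod_cpow by auto. apply (le_max_upto (fun j => Cmod (cpow q (a j)))). lia.
Qed.

Lemma weight_geom_dom : geom_dom rho r 1 W.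
Proof.
  intros m. unfold W, weight. rewrite Cmod_mult, Cmod_pow, Cmod_R, Rabs_m1, pow1.
  rewrite !Rmult_1_l. apply Cmod_cpow_csum_le. auto.
Qed.

Lemma one_minus_q_neq0 : (1 - q)%C <> 0%C.
Proof.
  intros E. assert (q = 1%C) by (replace q with (1 - (1 - q))%C by ring; rewrite E; ring).
  subst. rewrite Cmod_1 in Hq. lra.
Qed.

Let B := (1 + exp (Re x * ln (Cmod q) - Im x * Carg q)) / Cmod (1 - q).

Lemma B_pos : 0 < B.
Proof.
  apply Rdiv_lt_0_compat; [pose proof (exp_pos (Re x * ln (Cmod q) - Im x * Carg q)); lra|].
  apply Cmod_gt_0, one_minus_q_neq0.
Qed.

Lemma Cmod_qnum_shift_le m : Cmod (Y m) <= B.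
Proof.
  unfold Y, qnum, B. rewrite Cmod_div by apply one_minus_q_neq0.
  unfold Rdiv. apply Rmult_le_compat_r.
  { apply Rlt_le, Rinv_0_lt_compat, Cmod_gt_0, one_minus_q_neq0. }
  eapply Rle_trans; [apply Cmod_triangle|]. rewrite Cmod_opp, Cmod_1.
  apply Rplus_le_compat_l. rewrite Cmod_cpow by auto.
  destruct (Re_shift_ge r w x m Hw) as [HRe HIm].
  assert (Hln : ln (Cmod q) < 0).
  { rewrite <- ln_1. apply ln_increasing; auto. pose proof (Cmod_ge_0 q). lra. }
  apply exp_le.
  unfold Clog. simpl in *. rewrite HIm. nra.
Qed.

Lemma Cmod_qnum_shift_mult_le m t : Cmod (Y m * t) <= B * Cmod t.
Proof. rewrite Cmod_mult. apply Rmult_le_compat_r; [apply Cmod_ge_0|apply Cmod_qnum_shift_le]. Qed.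

Lemma geom_dom_weight_mult (g : (nat -> nat) -> C) (K : R) :
  (forall m, Cmod (g m) <= K) -> geom_dom rho r K (fun m => W m * g m)%C.
Proof.
  intros Hg m. rewrite Cmod_mult, Rmult_comm.
  pose proof (weight_geom_dom m) as HW. rewrite Rmult_1_l in HW.
  apply Rmult_le_compat; auto using Cmod_ge_0.
Qed.

Lemma geom_dom_weight_pow n : geom_dom rho r (B ^ n) (fun m => W m * Cpow (Y m) n)%C.
Proof.
  apply geom_dom_weight_mult. intros m. rewrite Cmod_pow.
  apply pow_incr. split; [apply Cmod_ge_0|apply Cmod_qnum_shift_le].
Qed.

Lemma geom_dom_weight_Cexp_partial t N :
  geom_dom rho r (exp (B * Cmod t)) (fun m => W m * Cexp_partial (Y m * t) N)%C.
Proof.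
  apply geom_dom_weight_mult. intros m.
  eapply Rle_trans; [apply Cmod_Cexp_partial_le|]. apply exp_le, Cmod_qnum_shift_mult_le.
Qed.

Lemma geom_dom_weight_Cexp t :
  geom_dom rho r (exp (B * Cmod t)) (fun m => W m * Cexp (Y m * t))%C.
Proof.
  apply geom_dom_weight_mult. intros m. rewrite Cmod_Cexp. apply exp_le.
  eapply Rle_trans; [apply Rle_abs|].
  eapply Rle_trans; [apply re_le_Cmod|apply Cmod_qnum_shift_mult_le].
Qed.

Lemma weight_term_eq t n m :
  (W m * (Cpow (Y m * t) n / RtoC (INR (fact n))))%C =
  (Cpow t n / RtoC (INR (fact n)) * (W m * Cpow (Y m) n))%C.
Proof. rewrite Cpow_mult_l. unfold Cdiv. ring. Qed.

Lemma geom_dom_weight_term t n :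
  geom_dom rho r (Cmod (Cpow t n / RtoC (INR (fact n))) * B ^ n)
    (fun m => W m * (Cpow (Y m * t) n / RtoC (INR (fact n))))%C.
Proof.
  intros m. rewrite weight_term_eq.
  exact (geom_dom_scal rho r _ _ _ (geom_dom_weight_pow n) m).
Qed.

Let zeta_term t n := (qzeta q r w a x (- RtoC (INR n)) * Cpow t n / RtoC (INR (fact n)))%C.

Lemma zeta_term_msum t n :
  zeta_term t n =
  (Cpow (RtoC 2) r * msum r (fun m => W m * (Cpow (Y m * t) n / RtoC (INR (fact n)))))%C.
Proof.
  unfold zeta_term. rewrite zeta_neg_INR.
  rewrite (functional_extensionality _ _ (weight_term_eq t n)).
  rewrite (msum_scal rho rho_bounds r (B ^ n));
    [|apply pow_le, Rlt_le, B_pos|apply geom_dom_weight_pow].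
  unfold W, Y, Cdiv. ring.
Qed.

Lemma sum_zeta_term t N :
  sum_n (zeta_term t) N = (Cpow (RtoC 2) r * msum r (fun m => W m * Cexp_partial (Y m * t) N))%C.
Proof.
  induction N as [|N IH].
  - rewrite sum_O, zeta_term_msum. do 2 f_equal. apply functional_extensionality. intros m.
    unfold Cexp_partial. rewrite sum_O. reflexivity.
  - rewrite sum_Sn, IH, zeta_term_msum. change (plus ?u ?v) with (u + v)%C.
    rewrite <- Cmult_plus_distr_l, <- (msum_plus rho rho_bounds r (exp (B * Cmod t))
      (Cmod (Cpow t (S N) / RtoC (INR (fact (S N)))) * B ^ S N)).
    + f_equal. f_equal. apply functional_extensionality. intros m.
      unfold Cexp_partial. rewrite sum_Sn. symmetry. apply Cmult_plus_distr_l.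
    + apply Rlt_le, exp_pos.
    + apply Rmult_le_pos; [apply Cmod_ge_0|apply pow_le, Rlt_le, B_pos].
    + apply geom_dom_weight_Cexp_partial.
    + apply geom_dom_weight_term.
Qed.

Lemma qEuler_gen_sub_sum t N :
  (qEuler_gen q r w a x t - sum_n (zeta_term t) N)%C =
  (Cpow (RtoC 2) r * msum r (fun m => W m * (Cexp (Y m * t) - Cexp_partial (Y m * t) N)))%C.
Proof.
  rewrite sum_zeta_term. unfold qEuler_gen. fold W.
  rewrite (functional_extensionality
             (fun m => W m * (Cexp (Y m * t) - Cexp_partial (Y m * t) N))%C
             (fun m => W m * Cexp (Y m * t) + (-1) * (W m * Cexp_partial (Y m * t) N))%C)
    by (intros m; ring).
  rewrite (msum_plus rho rho_bounds r (exp (B * Cmod t)) (Cmod (-1) * exp (B * Cmod t))).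
  - rewrite (msum_scal rho rho_bounds r (exp (B * Cmod t))).
    + unfold Y. ring.
    + apply Rlt_le, exp_pos.
    + apply geom_dom_weight_Cexp_partial.
  - apply Rlt_le, exp_pos.
  - apply Rmult_le_pos; [apply Cmod_ge_0|apply Rlt_le, exp_pos].
  - apply geom_dom_weight_Cexp.
  - apply geom_dom_scal, geom_dom_weight_Cexp_partial.
Qed.

Let K := Cmod (Cpow (RtoC 2) r) * (2 / (1 - rho)) ^ r.

Lemma K_ge0 : 0 <= K.
Proof.
  pose proof rho_bounds.
  apply Rmult_le_pos; [apply Cmod_ge_0|apply pow_le, Rlt_le, Rdiv_lt_0_compat; lra].
Qed.

Lemma Cmod_qEuler_gen_sub_sum_le t N :
  Cmod (qEuler_gen q r w a x t - sum_n (zeta_term t) N) <= K * exp_remainder (B * Cmod t) N.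
Proof.
  assert (HR : 0 <= B * Cmod t) by (apply Rmult_le_pos; [apply Rlt_le, B_pos|apply Cmod_ge_0]).
  rewrite qEuler_gen_sub_sum, Cmod_mult. unfold K. rewrite Rmult_assoc.
  apply Rmult_le_compat_l; [apply Cmod_ge_0|]. rewrite Rmult_comm.
  apply Cmod_msum_le; [apply rho_bounds|apply exp_remainder_ge0, HR|].
  apply geom_dom_weight_mult. intros m.
  apply Cmod_Cexp_sub_partial_le, Cmod_qnum_shift_mult_le.
Qed.

Lemma is_series_zeta_term t : is_series (zeta_term t) (qEuler_gen q r w a x t).
Proof.
  apply is_series_C_eps. intros eps Heps.
  assert (HK : 0 < K + 1) by (pose proof K_ge0; lra).
  destruct (exp_remainder_small (B * Cmod t) (eps / (K + 1))) as [N0 HN0];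
    [apply Rdiv_lt_0_compat; lra|].
  exists N0. intros N HN. specialize (HN0 N HN).
  eapply Rle_lt_trans; [apply Cmod_qEuler_gen_sub_sum_le|].
  assert (H0 : 0 <= exp_remainder (B * Cmod t) N)
    by (apply exp_remainder_ge0, Rmult_le_pos; [apply Rlt_le, B_pos|apply Cmod_ge_0]).
  apply Rle_lt_trans with ((K + 1) * exp_remainder (B * Cmod t) N); [nra|].
  replace eps with ((K + 1) * (eps / (K + 1))) by (field; lra).
  apply Rmult_lt_compat_l; lra.
Qed.

End NonzeroQ.

Lemma Rabs_bounded_of_is_lim_seq_0 (u : nat -> R) :
  is_lim_seq u 0 -> exists M, forall n, Rabs (u n) <= M.
Proof.
  intros Hu.
  destruct (proj1 (filterlim_locally _ _) Hu (mkposreal 1 Rlt_0_1)) as [N HN].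
  assert (Hinit : exists M, forall n, (n <= N)%nat -> Rabs (u n) <= M).
  { clear HN. induction N as [|N [M HM]].
    - exists (Rabs (u O)). intros n Hn. replace n with O by lia. lra.
    - exists (Rmax M (Rabs (u (S N)))). intros n Hn.
      destruct (Nat.eq_dec n (S N)) as [->|]; [apply Rmax_r|].
      eapply Rle_trans; [apply HM; lia|apply Rmax_l]. }
  destruct Hinit as [M HM]. exists (Rmax M 1). intros n.
  destruct (Compare_dec.le_lt_dec n N) as [Hn|Hn].
  - eapply Rle_trans; [apply HM, Hn|apply Rmax_l].
  - specialize (HN n ltac:(lia)).
    change (Rabs (u n - 0) < 1) in HN. rewrite Rminus_0_r in HN.
    eapply Rle_trans; [left; exact HN|apply Rmax_r].
Qed.

(* A power series vanishing near 0 has zero coefficients: its [n]-th derivative at 0 is [n! d n]. *)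
Lemma pseries_coef_eq_0 (d : nat -> R) (rho : R) : 0 < rho ->
  (forall s, Rabs s < rho -> is_series (fun n => d n * s ^ n) 0) -> forall n, d n = 0.
Proof.
  intros Hrho Hd n.
  assert (HR : Rbar_lt 0 (CV_radius d)).
  { destruct (CV_radius_bounded d) as [Hub _].
    assert (Hb : exists M, forall n, Rabs (d n * (rho / 2) ^ n) <= M).
    { apply Rabs_bounded_of_is_lim_seq_0, ex_series_lim_0. exists 0.
      apply Hd. rewrite Rabs_pos_eq; lra. }
    specialize (Hub _ Hb). destruct (CV_radius d); simpl in *; auto; lra. }
  pose proof (Derive_n_coef d n HR) as Hcoef.
  assert (H0 : Derive_n (PSeries d) n 0 = Derive_n (fun _ => 0) n 0).
  { apply Derive_n_ext_loc. exists (mkposreal rho Hrho). intros s Hs.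
    change (Rabs (s - 0) < rho) in Hs. rewrite Rminus_0_r in Hs.
    apply is_series_unique, Hd, Hs. }
  rewrite H0 in Hcoef. destruct n as [|n]; [simpl in Hcoef; lra|].
  rewrite Derive_n_const in Hcoef. pose proof (INR_fact_lt_0 (S n)). nra.
Qed.

Lemma exp_gen_coef_unique_R (e f : nat -> R) (g : R -> R) (rho : R) : 0 < rho ->
  (forall s, Rabs s < rho -> is_series (fun n => e n / INR (fact n) * s ^ n) (g s)) ->
  (forall s, Rabs s < rho -> is_series (fun n => f n / INR (fact n) * s ^ n) (g s)) ->
  forall n, e n = f n.
Proof.
  intros Hrho He Hf n.
  assert (Hd : forall n, e n / INR (fact n) - f n / INR (fact n) = 0).
  { apply (pseries_coef_eq_0 _ rho Hrho). intros s Hs.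
    replace 0 with (minus (g s) (g s)) by (unfold minus, plus, opp; simpl; ring).
    eapply is_series_ext; [|exact (is_series_minus _ _ _ _ (He s Hs) (Hf s Hs))].
    intros k. change (e k / INR (fact k) * s ^ k - f k / INR (fact k) * s ^ k =
                      (e k / INR (fact k) - f k / INR (fact k)) * s ^ k). ring. }
  specialize (Hd n). pose proof (INR_fact_lt_0 n).
  apply (Rmult_eq_reg_r (/ INR (fact n))); [lra|].
  apply Rinv_neq_0_compat. lra.
Qed.

Lemma is_series_exp_gen_real_point (E : nat -> C) (s : R) (l : C) :
  is_series (fun n => E n * Cpow (RtoC s) n / RtoC (INR (fact n)))%C l ->
  is_series (fun n => Re (E n) / INR (fact n) * s ^ n) (Re l) /\
  is_series (fun n => Im (E n) / INR (fact n) * s ^ n) (Im l).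
Proof.
  intros HE. apply is_series_C in HE. destruct HE as [HRe HIm].
  split; (eapply is_series_ext; [|eassumption]); intros n;
    simpl; rewrite <- RtoC_pow; pose proof (INR_fact_lt_0 n); destruct (E n);
    unfold Cdiv, Cinv, Cmult; simpl; field; lra.
Qed.

Lemma exp_gen_coef_unique (E F : nat -> C) (G : C -> C) (rho1 rho2 : R) :
  0 < rho1 -> 0 < rho2 ->
  (forall t, Cmod t < rho1 -> is_series (fun n => E n * Cpow t n / RtoC (INR (fact n)))%C (G t)) ->
  (forall t, Cmod t < rho2 -> is_series (fun n => F n * Cpow t n / RtoC (INR (fact n)))%C (G t)) ->
  forall n, E n = F n.
Proof.
  intros H1 H2 HE HF n.
  assert (Hpt : forall s, Rabs s < Rmin rho1 rho2 -> Cmod (RtoC s) < rho1 /\ Cmod (RtoC s) < rho2).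
  { intros s Hs. rewrite Cmod_R. pose proof (Rmin_l rho1 rho2). pose proof (Rmin_r rho1 rho2).
    lra. }
  pose proof (Rmin_pos _ _ H1 H2) as Hmin.
  apply C_ext.
  - apply (exp_gen_coef_unique_R (fun n => Re (E n)) (fun n => Re (F n))
             (fun s => Re (G (RtoC s))) _ Hmin); intros s Hs; destruct (Hpt s Hs);
      [apply (is_series_exp_gen_real_point E), HE|apply (is_series_exp_gen_real_point F), HF];
      auto.
  - apply (exp_gen_coef_unique_R (fun n => Im (E n)) (fun n => Im (F n))
             (fun s => Im (G (RtoC s))) _ Hmin); intros s Hs; destruct (Hpt s Hs);
      [apply (is_series_exp_gen_real_point E), HE|apply (is_series_exp_gen_real_point F), HF];
      auto.
Qed.

Lemma qnum_0_l (y : C) : y <> 0%C -> qnum (RtoC 0) y = RtoC 1.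
Proof.
  intros Hy. unfold qnum, cpow. rewrite Cmod_0.
  destruct (Req_dec_T 0 0) as [_|]; [|lra].
  destruct (Req_dec_T (Cmod y) 0) as [Hy0|_]; [apply Cmod_eq_0 in Hy0; contradiction|].
  apply C_ext; unfold Cdiv, Cinv, Cmult, Cminus, Cplus, Copp, Re, Im; simpl; field.
Qed.

Lemma Im_weight_0_l r a m : Im (weight r (RtoC 0) a m) = 0.
Proof.
  unfold weight, cpow. rewrite <- RtoC_pow, Cmod_0.
  destruct (Req_dec_T 0 0); [|lra]. destruct (Req_dec_T _ 0); unfold Im; simpl; ring.
Qed.

Lemma is_series_zeta_term_q0 r w a x t : (forall j, (j < r)%nat -> 0 < w j) -> 0 < Re x ->
  is_series (fun n => qzeta (RtoC 0) r w a x (- RtoC (INR n)) * Cpow t n / RtoC (INR (fact n)))%C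
    (qEuler_gen (RtoC 0) r w a x t).
Proof.
  intros Hw Hx.
  assert (HY : forall m, qnum (RtoC 0) (shift r w x m) = RtoC 1).
  { intros m. apply qnum_0_l. intros E. destruct (Re_shift_ge r w x m Hw) as [HRe _].
    rewrite E in HRe. simpl in HRe. lra. }
  set (S := (Cpow (RtoC 2) r * msum r (weight r (RtoC 0) a))%C).
  assert (Hzeta : forall n, qzeta (RtoC 0) r w a x (- RtoC (INR n)) = S).
  { intros n. rewrite zeta_neg_INR. unfold S. do 2 f_equal.
    apply functional_extensionality. intros m. rewrite HY, Cpow_1_l. ring. }
  assert (Hgen : qEuler_gen (RtoC 0) r w a x t = (S * Cexp t)%C).
  { unfold qEuler_gen, S.
    rewrite (functional_extensionality _ (fun m => Cexp t * weight r (RtoC 0) a m)%C)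
      by (intros m; rewrite HY, Cmult_1_l; ring).
    rewrite (msum_scal_real r (Cexp t) _ (Im_weight_0_l r a)). ring. }
  rewrite Hgen.
  eapply is_series_ext; [|exact (@is_series_scal_l C_AbsRing C_NormedModule S _ _ (Cexp_series t))].
  intros n. rewrite Hzeta. change (S * (Cpow t n / RtoC (INR (fact n))) = S * Cpow t n / RtoC (INR (fact n)))%C.
  unfold Cdiv. ring.
Qed.

Theorem theorem7 (q : C) (r : nat) (w : nat -> R) (a : nat -> C) (x : C) :
  Cmod q < 1 ->
  (forall j, (j < r)%nat -> 0 < w j) ->
  0 < Re x ->
  (forall j, (j < r)%nat -> Cmod (cpow q (a j)) < 1) ->
  (exists E : nat -> C, is_qEuler_seq q r w a x E) /\
  (forall E : nat -> C, is_qEuler_seq q r w a x E ->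
     forall n : nat, qzeta q r w a x (- RtoC (INR n)) = E n).
Proof.
  intros Hq Hw Hx Ha.
  assert (Hgen : forall t, is_series
    (fun n => qzeta q r w a x (- RtoC (INR n)) * Cpow t n / RtoC (INR (fact n)))%C
    (qEuler_gen q r w a x t)).
  { destruct (Req_dec (Cmod q) 0) as [Hq0|Hq0].
    - apply Cmod_eq_0 in Hq0. subst q. intros t. apply is_series_zeta_term_q0; auto.
    - intros t. apply is_series_zeta_term; auto. }
  split.
  - exists (fun n => qzeta q r w a x (- RtoC (INR n))), 1. split; [lra|]. auto.
  - intros E [rho [Hrho HE]].
    exact (exp_gen_coef_unique _ E _ 1 rho Rlt_0_1 Hrho (fun t _ => Hgen t) HE).
Qed.
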